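(* Let $O\in\mathrm{O}(2S)$, let $1\le i\le S$ and $1\le j\le 2S$. Then there exist $W\in\mathrm{SpO}(2S,\mathbb{R})$ and a real number $\lambda\neq 0$ such that $(OW)_{l,2i-1}=\lambda\,(OW)_{l,2i}$ for every row index $l\neq j$; i.e. columns $2i-1$ and $2i$ of $OW$ are proportional with the same nonzero constant in all rows except row $j$.
   Context: Coordinates of $\mathbb{R}^{2S}$ are ordered as $(q_1,p_1,\dots,q_S,p_S)$. Let $\Omega=\bigoplus_{i=1}^S\begin{pmatrix}0&1\\-1&0\end{pmatrix}$. $\mathrm{O}(2S)$ is the orthogonal group and $\mathrm{SpO}(2S,\mathbb{R})$ is the group of real $2S\times2S$ matrices $W$ that are orthogonal and symplectic ($W^T\Omega W=\Omega$). *)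

From mathcomp Require Import all_boot all_order all_algebra.
From mathcomp Require Import reals.
Set Implicit Arguments. Unset Strict Implicit. Unset Printing Implicit Defensive.
Import GRing.Theory Num.Theory.
Local Open Scope ring_scope.

(* Coordinates of R^{2S} are (q_1,p_1,...,q_S,p_S); 0-based index 2k is q_{k+1},
   2k+1 is p_{k+1}. *)

(* The standard symplectic form Omega = (+)_{k} [[0,1],[-1,0]]. *)
Definition Omega (R : pzRingType) (S : nat) : 'M[R]_(S.*2) :=
  \matrix_(a, b)
    (if ~~ odd a && (b == a.+1 :> nat) then 1
     else if odd a && (b.+1 == a :> nat) then -1 else 0).

Definition orthogonalmx (R : pzRingType) (n : nat) (O : 'M[R]_n) : Prop :=
  O^T *m O = 1%:M.

Definition SpO (R : pzRingType) (S : nat) (W : 'M[R]_(S.*2)) : Prop :=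
  orthogonalmx W /\ W^T *m Omega R S *m W = Omega R S.

(* 0-based column indices of q_{i+1} and p_{i+1} (i.e. columns 2i-1, 2i in 1-based). *)
Lemma colq_proof S (i : 'I_S) : (i.*2 < S.*2)%N.
Proof. by rewrite ltn_double. Qed.
Lemma colp_proof S (i : 'I_S) : (i.*2.+1 < S.*2)%N.
Proof. by rewrite -doubleS leq_double. Qed.
Definition colq S (i : 'I_S) : 'I_(S.*2) := Ordinal (colq_proof i).
Definition colp S (i : 'I_S) : 'I_(S.*2) := Ordinal (colp_proof i).

From mathcomp Require Import all_boot all_order all_algebra.
From mathcomp Require Import reals.
From mathcomp Require Import ring lra.
Import GRing.Theory Num.Theory.
Local Open Scope ring_scope.

(* Right multiplication by Omega is a complex structure on row vectors
   (Omega^T = -Omega, Omega^2 = -1), and a matrix that is orthogonal and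
   commutes with Omega is symplectic: SpO(2S) is the unitary group U(S).
   U(S) acts transitively on the unit sphere: for unit vectors r and t, with
   w = r - t, the complex reflection v |-> v + alpha <v,w> w, where
   alpha = -1/<r,w>, is unitary (because |w|^2 = 2 Re <r,w>) and sends r to t.
   Take r the j-th row of O and t = (3/5) e_q - (4/5) e_p.  Then the j-th row
   of the orthogonal matrix O W is t, every other row l is orthogonal to it,
   i.e. 3 (O W)_{l,q} = 4 (O W)_{l,p}, and lambda = 4/3 works. *)

Lemma partner_proof {S} (a : 'I_(S.*2)) : ((if odd a then a.-1 else a.+1) < S.*2)%N.
Proof.
case: a => a lt_a /=; case: ifPn => [_|even_a].
  exact: leq_ltn_trans (leq_pred a) lt_a.
rewrite ltn_neqAle lt_a andbT; apply: contraNneq even_a => eq_a.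
by have := odd_double S; rewrite -eq_a /= => /negbFE.
Qed.

Definition partner {S} (a : 'I_(S.*2)) : 'I_(S.*2) := Ordinal (partner_proof a).

Lemma odd_partner S (a : 'I_(S.*2)) : odd (partner a) = ~~ odd a.
Proof. by case: a => [[|a] ?] //=; case odd_a: (odd a) => /=; rewrite ?odd_a. Qed.

Lemma partnerK S : involutive (@partner S).
Proof.
move=> a; apply: val_inj; rewrite [in LHS]/= odd_partner.
by case: a => [[|a] ?] //=; case: (odd a).
Qed.

Lemma OmegaE (R : pzRingType) S (a b : 'I_(S.*2)) :
  Omega R S a b = (-1) ^+ odd a * (b == partner a)%:R.
Proof.
rewrite mxE; case: a => [a lt_a].
have -> : (b == partner (Ordinal lt_a)) = if odd a then b.+1 == a else b == a.+1 :> nat.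
  rewrite -val_eqE /=; case: ifP => // odd_a.
  by case: a odd_a {lt_a} => [|a] //= _; rewrite eqSS.
by case: (odd a) => /=; case: (_ == _); rewrite ?expr0 ?expr1 ?mulr0 ?mulN1r ?mul1r.
Qed.

Lemma tr_Omega (R : pzRingType) S : (Omega R S)^T = - Omega R S.
Proof.
apply/matrixP => a b; rewrite mxE [RHS]mxE !OmegaE.
have [->|/negbTE b_a] := eqVneq b (partner a).
  by rewrite partnerK !eqxx odd_partner signrN !mulr1.
have -> : (a == partner b) = false.
  by apply: contraFF b_a => /eqP ->; rewrite partnerK.
by rewrite !mulr0 oppr0.
Qed.

Lemma Omega_sqr (R : pzRingType) S : Omega R S *m Omega R S = - 1%:M.
Proof.
apply/matrixP => a c; rewrite !mxE (bigD1 (partner a)) //= big1 ?addr0.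
  rewrite !OmegaE eqxx /= mulr1n mulr1 partnerK odd_partner signrN mulNr mulrN mulrA.
  by rewrite -expr2 sqrr_sign mul1r (eq_sym c).
by move=> b /negbTE b_a; rewrite OmegaE b_a mulr0 mul0r.
Qed.

Lemma symplectic_of_commute (R : pzRingType) n (Om M : 'M[R]_n) :
  orthogonalmx M -> Om *m M = M *m Om -> M^T *m Om *m M = Om.
Proof. by rewrite /orthogonalmx => M_orth OmM; rewrite -mulmxA OmM mulmxA M_orth mul1mx. Qed.

Lemma trmx11 (R : Type) (A : 'M[R]_1) : A^T = A.
Proof. by apply/matrixP => i j; rewrite !ord1 mxE. Qed.

Lemma delta_mx11 (R : pzSemiRingType) : delta_mx 0 0 = 1%:M :> 'M[R]_1.
Proof. by apply/matrixP => a b; rewrite !ord1 !mxE. Qed.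

Section ComplexScalars.
Variable R : comPzRingType.

Definition J2 : 'M[R]_(1 + 1) := block_mx 0 1%:M (-1)%:M 0.

Lemma tr_J2 : J2^T = - J2.
Proof. by rewrite /J2 tr_block_mx opp_block_mx !trmx0 !oppr0 !tr_scalar_mx raddfN /= opprK. Qed.

Lemma J2_sqr : J2 *m J2 = - 1%:M.
Proof.
rewrite /J2 mulmx_block !mulmx0 !mul0mx !add0r !addr0 mulmx1 mul1mx.
by rewrite -raddfN /= -scalar_mx_block.
Qed.

(* The complex number a + i b acting on a 2-dimensional real frame. *)
Definition cmx (a b : R) : 'M[R]_(1 + 1) := a%:M + b *: J2.

Lemma cmxJ2C a b : cmx a b *m J2 = J2 *m cmx a b.
Proof.
by rewrite /cmx mulmxDl mulmxDr mul_scalar_mx mul_mx_scalar -scalemxAl -scalemxAr.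
Qed.

Lemma tr_cmx a b : (cmx a b)^T = cmx a (- b).
Proof. by rewrite /cmx raddfD /= linearZ /= tr_scalar_mx tr_J2 scalerN scaleNr. Qed.

Lemma tr_cmx_cmx a b : (cmx a b)^T *m cmx a b = (a ^+ 2 + b ^+ 2)%:M.
Proof.
rewrite tr_cmx /cmx mulmxDl !mulmxDr !mul_scalar_mx -!scalemxAl -!scalemxAr.
rewrite mul_mx_scalar J2_sqr !scalerA scale_scalar_mx scalerN scalemx1 (mulrC a).
by rewrite !mulNr scaleNr (mulrC b) addrA addrK raddfN /= opprK -raddfD /= -!expr2.
Qed.

Lemma cmx_unitary_cond a b s : a + a + s * (a ^+ 2 + b ^+ 2) = 0 ->
  cmx a b + (cmx a b)^T + s *: ((cmx a b)^T *m cmx a b) = 0.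
Proof.
move=> cond; rewrite tr_cmx_cmx tr_cmx /cmx scale_scalar_mx scaleNr addrACA subrr.
by rewrite addr0 -!raddfD /= cond raddf0.
Qed.

End ComplexScalars.
Arguments cmx {R}.

Section UnitaryTransitivity.
Variables (R : realFieldType) (n : nat) (Om : 'M[R]_n).
Hypotheses (tr_Om : Om^T = - Om) (Om_sqr : Om *m Om = - 1%:M).

Definition rank2_update (W : 'M[R]_(1 + 1, n)) (K : 'M[R]_(1 + 1)) : 'M[R]_n :=
  1%:M + W^T *m K *m W.

Lemma rank2_update_orthogonal W K s :
  W *m W^T = s%:M -> K + K^T + s *: (K^T *m K) = 0 ->
  orthogonalmx (rank2_update W K).
Proof.
move=> gramW condK; rewrite /orthogonalmx /rank2_update.
have -> : (1%:M + W^T *m K *m W)^T = 1%:M + W^T *m K^T *m W.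
  by rewrite raddfD /= trmx1 !trmx_mul trmxK mulmxA.
have quad : W^T *m K^T *m W *m (W^T *m K *m W) = W^T *m (s *: (K^T *m K)) *m W.
  rewrite !mulmxA -(mulmxA _ W) gramW mul_mx_scalar.
  by rewrite -scalemxAr -!scalemxAl !mulmxA.
rewrite mulmxDl !mulmxDr !mul1mx mulmx1 quad -addrA -!mulmxDl -!mulmxDr addrA condK.
by rewrite mulmx0 mul0mx addr0.
Qed.

Lemma rank2_update_commute W K :
  W *m Om = J2 R *m W -> K *m J2 R = J2 R *m K ->
  Om *m rank2_update W K = rank2_update W K *m Om.
Proof.
move=> WOm KJ2; rewrite /rank2_update mulmxDr mulmxDl mulmx1 mul1mx; congr (_ + _).
have OmWt : Om *m W^T = W^T *m J2 R.
  by rewrite -[Om]trmxK -trmx_mul tr_Om mulmxN WOm raddfN /= trmx_mul tr_J2 mulmxN opprK.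
by rewrite !mulmxA OmWt -!mulmxA WOm; congr (_ *m _); rewrite mulmxA -KJ2 -mulmxA.
Qed.

Lemma skew_form_diag0 (w : 'rV[R]_n) : w *m Om *m w^T = 0.
Proof.
have skew : (w *m Om *m w^T)^T = - (w *m Om *m w^T).
  by rewrite !trmx_mul trmxK tr_Om mulmxA mulmxN mulNmx.
rewrite trmx11 in skew; apply/matrixP => i j; rewrite !ord1 [RHS]mxE.
by move/matrixP: skew => /(_ 0 0); rewrite [in RHS]mxE; lra.
Qed.

Definition frame (w : 'rV[R]_n) : 'M[R]_(1 + 1, n) := col_mx w (w *m Om).

Lemma frame_Om w : frame w *m Om = J2 R *m frame w.
Proof.
rewrite /frame /J2 mul_col_mx mul_block_col !mul0mx mul1mx add0r addr0.
by rewrite -mulmxA Om_sqr mulmxN mulmx1 mul_scalar_mx scaleN1r.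
Qed.

Lemma frame_gram w : frame w *m (frame w)^T = ((w *m w^T) 0 0)%:M.
Proof.
rewrite /frame tr_col_mx mul_col_row (scalar_mx_block 1 1).
rewrite -mx11_scalar !trmx_mul tr_Om !mulNmx !mulmxN !mulmxA skew_form_diag0 oppr0.
by rewrite -(mulmxA w Om Om) Om_sqr mulmxN mulmx1 mulNmx opprK.
Qed.

Lemma row_rank2_update_frame (r w : 'rV[R]_n) a b :
  a * (r *m w^T) 0 0 - b * (r *m (w *m Om)^T) 0 0 = -1 ->
  a * (r *m (w *m Om)^T) 0 0 + b * (r *m w^T) 0 0 = 0 ->
  r *m rank2_update (frame w) (cmx a b) = r - w.
Proof.
move=> re_cond im_cond; rewrite /rank2_update mulmxDr mulmx1; congr (r + _).
rewrite /frame tr_col_mx !mulmxA mul_mx_row.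
rewrite [r *m w^T]mx11_scalar [r *m (w *m Om)^T]mx11_scalar.
rewrite /cmx /J2 mulmxDr mul_mx_scalar -scalemxAr mul_row_block.
rewrite !mulmx0 add0r addr0 mulmx1 !scale_row_mx add_row_mx -scalar_mxM.
rewrite !scale_scalar_mx -!raddfD /= im_cond raddf0 mulrN1 mulrN re_cond.
by rewrite mul_row_col mul0mx addr0 mul_scalar_mx scaleN1r.
Qed.

Lemma rV_dot_self_eq0 (w : 'rV[R]_n) : ((w *m w^T) 0 0 == 0) = (w == 0).
Proof.
apply/eqP/eqP => [|->]; last by rewrite mul0mx mxE.
rewrite mxE => sum0; apply/matrixP => i j; rewrite ord1 mxE.
have nneg l : xpredT l -> 0 <= w 0 l * w^T l 0 by rewrite mxE -expr2 sqr_ge0.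
have /eqP := psumr_eq0P nneg sum0 (i := j) isT.
by rewrite mxE mulf_eq0 orbb => /eqP.
Qed.

Lemma unitary_transitive (r t : 'rV[R]_n) :
  r *m r^T = 1%:M -> t *m t^T = 1%:M ->
  exists M : 'M[R]_n, [/\ orthogonalmx M, Om *m M = M *m Om & r *m M = t].
Proof.
move=> r_unit t_unit.
have [<-|r_t] := eqVneq r t.
  by exists 1%:M; rewrite /orthogonalmx trmx1 !mulmx1 mul1mx.
pose w := r - t.
pose x := (r *m w^T) 0 0; pose y := (r *m (w *m Om)^T) 0 0.
have w_norm : (w *m w^T) 0 0 = x + x.
  rewrite /x /w raddfB /= !mulmxBl !mulmxBr r_unit t_unit.
  have -> : t *m r^T = r *m t^T by rewrite -[t *m r^T]trmx11 trmx_mul trmxK.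
  by rewrite !mxE; ring.
have x_neq0 : x != 0.
  apply: contra_neq r_t => x0; apply/eqP; rewrite -subr_eq0 -rV_dot_self_eq0.
  by rewrite w_norm x0 addr0.
have D_neq0 : x ^+ 2 + y ^+ 2 != 0.
  have x2_gt0 : 0 < x ^+ 2 by rewrite lt0r sqr_ge0 andbT expf_neq0.
  by rewrite lt0r_neq0 // ltr_wpDr ?sqr_ge0.
pose a := - x / (x ^+ 2 + y ^+ 2); pose b := y / (x ^+ 2 + y ^+ 2).
exists (rank2_update (frame w) (cmx a b)); split.
- apply: rank2_update_orthogonal; first exact: frame_gram.
  by apply: cmx_unitary_cond; rewrite w_norm /a /b; field.
- apply: rank2_update_commute; [exact: frame_Om | exact: cmxJ2C].
- rewrite row_rank2_update_frame; first by rewrite opprB addrC subrK.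
  all: by rewrite -/x -/y /a /b; field.
Qed.

End UnitaryTransitivity.

Lemma row_dot_orthogonal {R : comPzRingType} {n} (N : 'M[R]_n) l j :
  N *m N^T = 1%:M -> row l N *m (row j N)^T = (l == j)%:R%:M.
Proof.
move=> N_orth; rewrite !rowE trmx_mul mulmxA -(mulmxA _ N) N_orth mulmx1.
by rewrite trmx_delta mul_delta_mx_cond delta_mx11 raddfMn.
Qed.

Lemma dot_tr_delta (R : pzSemiRingType) n (u : 'rV[R]_n) q :
  u *m ('e_q)^T = (u 0 q)%:M.
Proof. by rewrite trmx_delta -colE; apply/matrixP => a b; rewrite !ord1 !mxE eqxx. Qed.

Lemma dot_tr_delta2 (R : comPzRingType) n (u : 'rV[R]_n) a b q p :
  u *m (a *: 'e_q - b *: 'e_p)^T = (a * u 0 q - b * u 0 p)%:M.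
Proof.
rewrite linearB /= !linearZ /= scalerN mulmxBr -!scalemxAr !dot_tr_delta.
by rewrite !scale_scalar_mx -raddfB.
Qed.

Lemma colqp_neq {S} (i : 'I_S) : colq i != colp i.
Proof. by apply/eqP => /(congr1 (odd \o val)) /=; rewrite odd_double. Qed.

Theorem lemma1 (R : realType) (S : nat) (O : 'M[R]_(S.*2)) (i : 'I_S) (j : 'I_(S.*2)) :
  orthogonalmx O ->
  exists W : 'M[R]_(S.*2), SpO W /\
    exists lam : R, lam != 0 /\
      forall l : 'I_(S.*2), l != j ->
        (O *m W) l (colq i) = lam * (O *m W) l (colp i).
Proof.
move=> /mulmx1C O_orth.
(* A rational unit vector with both coordinates nonzero. *)
pose t : 'rV[R]_(S.*2) := (3/5) *: 'e_(colq i) - (4/5) *: 'e_(colp i).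
have dot_t (u : 'rV[R]_(S.*2)) :
    u *m t^T = (3/5 * u 0 (colq i) - 4/5 * u 0 (colp i))%:M.
  exact: dot_tr_delta2.
have t_unit : t *m t^T = 1%:M.
  rewrite dot_t !mxE !eqxx (negbTE (colqp_neq i)) eq_sym (negbTE (colqp_neq i)).
  by congr (_%:M); rewrite /= mulr1n mulr0n !mulr0 !mulr1; field.
have r_unit : row j O *m (row j O)^T = 1%:M.
  by rewrite (row_dot_orthogonal _ _ _ O_orth) eqxx.
have [M [M_orth OmM rowM]] :=
  @unitary_transitive _ _ _ (tr_Omega R S) (Omega_sqr R S) _ _ r_unit t_unit.
exists M; split; first by split; last exact: symplectic_of_commute.
exists (4/3); split; first by rewrite mulf_neq0 ?invr_eq0 ?pnatr_eq0.
move=> l l_j; set N := O *m M.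
have N_orth : N *m N^T = 1%:M.
  by rewrite trmx_mul mulmxA -(mulmxA O) (mulmx1C M_orth) mulmx1 O_orth.
have rowN : row j N = t by rewrite row_mul rowM.
have /matrixP/(_ 0 0) := row_dot_orthogonal _ l j N_orth.
rewrite rowN dot_t (negbTE l_j) !mxE /= !mulr1n; lra.
Qed.
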